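(* Let $m\in\mathbb{Z}_{>0}\cup\{\infty\}$ and $n\ge 1$. Let $\tilde W$ be the subalgebra of $H(m,1,n)$ generated by $\tau,\tau^{-1},\sigma_1,\dots,\sigma_{n-2}$. Then every $x\in H(m,1,n)$ is an $\mathcal{A}_m$-linear combination of elements of the form $$\sigma_j^{-1}\sigma_{j-1}^{-1}\cdots\sigma_1^{-1}\,\tau^{\alpha}\,\sigma_1\sigma_2\cdots\sigma_{n-1}\,w,\qquad j\in\{0,\dots,n-1\},\ \alpha\in\mathfrak{E}_m,\ w\in\tilde W$$ (empty products equal $1$).
   Context: $q,v_1,\dots,v_m$ are indeterminates; $\mathcal{A}_m:=\mathbb{C}[q^{\pm1},v_1^{\pm1},\dots,v_m^{\pm1}]$ for finite $m$ and $\mathcal{A}_\infty:=\mathbb{C}[q,q^{-1}]$. $\mathfrak{E}_m:=\{0,\dots,m-1\}$ for finite $m$, $\mathfrak{E}_\infty:=\mathbb{Z}$. The algebra $H(m,1,n)$ is the associative $\mathcal{A}_m$-algebra generated by $\tau,\tau^{-1},\sigma_1,\dots,\sigma_{n-1}$ (with $\tau\tau^{-1}=\tau^{-1}\tau=1$) subject to: $\sigma_i\sigma_{i+1}\sigma_i=\sigma_{i+1}\sigma_i\sigma_{i+1}$ ($1\le i\le n-2$); $\sigma_i\sigma_j=\sigma_j\sigma_i$ for $|i-j|>1$; $\tau\sigma_1\tau\sigma_1=\sigma_1\tau\sigma_1\tau$; $\tau\sigma_i=\sigma_i\tau$ for $i>1$; $\sigma_i^2=(q-q^{-1})\sigma_i+1$;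 and, if $m<\infty$, $(\tau-v_1)\cdots(\tau-v_m)=0$. (For $m=\infty$ this is the affine Hecke algebra of type GL.) *)

From mathcomp Require Import all_boot all_algebra.
From mathcomp Require Import complex Rstruct.
Set Implicit Arguments. Unset Strict Implicit. Unset Printing Implicit Defensive.
Import GRing.Theory.
Local Open Scope ring_scope.

Definition Cx : fieldType := (Rdefinitions.R)[i].

(* m in Z_{>0} ∪ {∞}: [Some k] is the finite value k, [None] is ∞. *)
Definition mval := option nat.

Definition mval_ok (m : mval) : Prop :=
  match m with Some k => (0 < k)%N | None => True end.

(* indices k of the parameters v_k of A_m : 1 <= k <= m (none if m = ∞) *)
Definition vidx (m : mval) (k : nat) : Prop :=
  match m with Some mm => (1 <= k <= mm)%N | None => False end.

Definition Eset (m : mval) (a : int) : Prop :=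
  match m with Some mm => (0 <= a)%R /\ (a < mm%:Z)%R | None => True end.

Section Hecke.
Variable S : algType Cx.

Definition tpow (t ti : S) (a : int) : S :=
  match a with Posz k => t ^+ k | Negz k => ti ^+ k.+1 end.

Inductive gen_alg (G : S -> Prop) : S -> Prop :=
  | ga_scal (c : Cx) : gen_alg G (c%:A)
  | ga_gen x : G x -> gen_alg G x
  | ga_add x y : gen_alg G x -> gen_alg G y -> gen_alg G (x + y)
  | ga_mul x y : gen_alg G x -> gen_alg G y -> gen_alg G (x * y).

Definition lin_comb (A B : S -> Prop) (x : S) : Prop :=
  exists l : seq (S * S),
    (forall p, List.In p l -> A p.1 /\ B p.2) /\
    x = \sum_(p <- l) p.1 * p.2.

(* The defining relations of H(m,1,n), for elements
   q, qi (= q^-1), v k, vi k (= v_k^-1) (images of A_m, central),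
   t (= tau), ti (= tau^-1), s i (= sigma_i, 1 <= i <= n-1). *)
Definition hecke_rel (m : mval) (n : nat) (q qi : S) (v vi : nat -> S)
    (t ti : S) (s : nat -> S) : Prop :=
  [/\ [/\ q * qi = 1 /\ qi * q = 1,
      forall k, vidx m k -> v k * vi k = 1 /\ vi k * v k = 1,
      (forall x : S, q * x = x * q) /\
        (forall k, vidx m k -> forall x : S, v k * x = x * v k) &
      t * ti = 1 /\ ti * t = 1],
   [/\ forall i, (1 <= i)%N -> (i <= n - 2)%N ->
         s i * s i.+1 * s i = s i.+1 * s i * s i.+1,
       forall i j, (1 <= i <= n - 1)%N -> (1 <= j <= n - 1)%N ->
         ((i.+1 < j) || (j.+1 < i))%N -> s i * s j = s j * s i,
       (2 <= n)%N -> t * s 1 * t * s 1 = s 1 * t * s 1 * t,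
       forall i, (1 < i <= n - 1)%N -> t * s i = s i * t &
       forall i, (1 <= i <= n - 1)%N -> s i ^+ 2 = (q - qi) * s i + 1] &
       match m with
       | Some mm => \prod_(1 <= k < mm.+1) (t - v k) = 0
       | None => True
       end].
End Hecke.

From mathcomp Require Import all_boot all_algebra zify.
Set Implicit Arguments. Unset Strict Implicit. Unset Printing Implicit Defensive.
Import GRing.Theory.
Local Open Scope ring_scope.

(* Let P = s_1 ... s_{n-1} and D_j = s_j^-1 ... s_1^-1.  The span of the elements
   D_j t^a P w (j < n, a in Z, w in W~) contains 1 = D_{n-1} P and is stable under
   left multiplication by the generators, so it is the whole algebra.  A generator
   s_i moves through D_j t^a P by the braid relations, changing j by at most one
   (s_j^-1 = s_j - (q - q^-1) handles i = j + 1).  For t^(+-1) and j > 0 one moves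
   t^(+-1) past s_1^-1 t^a s_1, using that s_1 t s_1 commutes with t.  Finally, for
   finite m the relation prod_k (t - v_k) = 0 with invertible v_k expresses every
   t^a, a in Z, through t^0, ..., t^(m-1). *)

Lemma commr_inverse (R : pzSemiRingType) (x a b : R) :
  GRing.comm x a -> a * b = 1 -> b * a = 1 -> GRing.comm x b.
Proof.
move=> xa ab ba.
by rewrite /GRing.comm -[x * b]mul1r -ba -mulrA (mulrA a) -xa -!mulrA ab mulr1.
Qed.

Section GeneratedSubalgebra.
Variable S : algType Cx.
Implicit Types (G : S -> Prop) (x y : S).

Lemma gen_alg_mono G1 G2 x :
  (forall y, G1 y -> G2 y) -> gen_alg G1 x -> gen_alg G2 x.
Proof.
by move=> sG12; elim=> *; [apply: ga_scal | apply: ga_gen; auto | apply: ga_add | apply: ga_mul].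
Qed.

Lemma gen_alg1 G : gen_alg G 1.
Proof. by rewrite -[1]scale1r; apply: ga_scal. Qed.

Lemma gen_algN G x : gen_alg G x -> gen_alg G (- x).
Proof. by move=> Gx; rewrite -scaleN1r -mulr_algl; apply: ga_mul Gx; apply: ga_scal. Qed.

Lemma gen_algB G x y : gen_alg G x -> gen_alg G y -> gen_alg G (x - y).
Proof. by move=> Gx Gy; apply: ga_add Gx (gen_algN Gy). Qed.

Lemma gen_algX G x k : gen_alg G x -> gen_alg G (x ^+ k).
Proof.
move=> Gx; elim: k => [|k IHk]; first by rewrite expr0; apply: gen_alg1.
by rewrite exprS; apply: ga_mul.
Qed.

Lemma gen_alg_comm G x c :
  (forall y, G y -> GRing.comm y x) -> gen_alg G c -> GRing.comm c x.
Proof.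
move=> Gx; elim=> [a | y /Gx // | y z _ yx _ zx | y z _ yx _ zx].
- exact: comm_alg.
- exact: commr_sym (commrD (commr_sym yx) (commr_sym zx)).
- exact: commr_sym (commrM (commr_sym yx) (commr_sym zx)).
Qed.

End GeneratedSubalgebra.

Section LinearCombinations.
Variables (S : algType Cx) (G : S -> Prop).
Hypothesis G_central : forall y, G y -> forall x, GRing.comm y x.
Local Notation A := (gen_alg G).
Implicit Types (B : S -> Prop) (x y : S).

Lemma lin_comb0 B : lin_comb A B 0.
Proof. by exists [::]; rewrite big_nil. Qed.

Lemma lin_comb_mem B b : B b -> lin_comb A B b.
Proof.
move=> Bb; exists [:: (1, b)]; split; last by rewrite big_seq1 mul1r.
by move=> p [<- | []]; split => //; apply: gen_alg1.
Qed.

Lemma lin_combD B x y : lin_comb A B x -> lin_comb A B y -> lin_comb A B (x + y).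
Proof.
move=> [l1 [h1 ->]] [l2 [h2 ->]]; exists (l1 ++ l2); split; last by rewrite big_cat.
by move=> p /(List.in_app_or l1 l2 p)[]; [apply: h1 | apply: h2].
Qed.

Lemma lin_combMl B c x : A c -> lin_comb A B x -> lin_comb A B (c * x).
Proof.
move=> Ac [l [hl ->]]; exists [seq (c * p.1, p.2) | p <- l]; split.
  move=> p /List.in_map_iff[p' [<- /hl[/= Ap' Bp']]].
  by split => //; apply: ga_mul.
by rewrite big_map mulr_sumr; apply: eq_bigr => p _; rewrite mulrA.
Qed.

Lemma lin_combN B x : lin_comb A B x -> lin_comb A B (- x).
Proof. by rewrite -mulN1r; apply: lin_combMl; apply: gen_algN; apply: gen_alg1. Qed.

Lemma lin_combB B x y : lin_comb A B x -> lin_comb A B y -> lin_comb A B (x - y).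
Proof. by move=> Bx By; apply: lin_combD Bx (lin_combN By). Qed.

Lemma lin_comb_sandwich B B' l r x :
  (forall b, B b -> lin_comb A B' (l * b * r)) ->
  lin_comb A B x -> lin_comb A B' (l * x * r).
Proof.
move=> lBr [p [hp ->]]; elim: p hp => [|[c b] p IHp] hp.
  by rewrite big_nil mulr0 mul0r; apply: lin_comb0.
rewrite big_cons mulrDr mulrDl; apply: lin_combD; last by apply: IHp => y py; apply: hp; right.
have [/= Ac Bb] := hp _ (or_introl erefl).
have cC y : GRing.comm c y := gen_alg_comm (fun z Gz => G_central Gz y) Ac.
rewrite mulrA -cC -(mulrA c l b) -mulrA.
by apply: lin_combMl => //; apply: lBr.
Qed.

Lemma lin_comb_mull B B' l x :
  (forall b, B b -> lin_comb A B' (l * b)) -> lin_comb A B x -> lin_comb A B' (l * x).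
Proof.
by move=> lB Bx; rewrite -[l * x]mulr1; apply: (lin_comb_sandwich _ Bx) => b /lB; rewrite mulr1.
Qed.

Lemma lin_comb_mulr B B' r x :
  (forall b, B b -> lin_comb A B' (b * r)) -> lin_comb A B x -> lin_comb A B' (x * r).
Proof.
move=> Br Bx; rewrite -[x * r]mul1r mulrA.
by apply: (lin_comb_sandwich _ Bx) => b /Br; rewrite mul1r.
Qed.

Lemma lin_comb_mono B B' x :
  (forall b, B b -> B' b) -> lin_comb A B x -> lin_comb A B' x.
Proof.
move=> sBB' Bx; rewrite -[x]mulr1.
by apply: (lin_comb_mulr _ Bx) => b /sBB' B'b; rewrite mulr1; apply: lin_comb_mem.
Qed.

End LinearCombinations.

Section IntegerPowers.
Variables (S : algType Cx) (t ti : S).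
Hypotheses (t_ti : t * ti = 1) (ti_t : ti * t = 1).
Local Notation tp := (tpow t ti).

Lemma tpow0 : tp 0 = 1.
Proof. exact: expr0. Qed.

Lemma tpow1 : tp 1 = t.
Proof. exact: expr1. Qed.

Lemma mul_t_tpow a : t * tp a = tp (a + 1).
Proof.
case: a => k /=; first by rewrite addn1 exprS.
case: k => [|k]; first by rewrite /= expr1 t_ti expr0.
have -> : Negz k.+1 + 1 = Negz k by lia.
by rewrite /= exprS mulrA t_ti mul1r.
Qed.

Lemma mul_ti_tpow a : ti * tp a = tp (a - 1).
Proof.
case: a => k /=; last by rewrite addn0 -exprS.
case: k => [|k]; first by rewrite /= expr0 mulr1 expr1.
have -> : Posz k.+1 - 1 = Posz k by lia.
by rewrite /= exprS mulrA ti_t mul1r.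
Qed.

Lemma commr_tpow x : GRing.comm x t -> forall a, GRing.comm x (tp a).
Proof.
move=> xt a; have xti := commr_inverse xt t_ti ti_t.
by case: a => k; apply: commrX.
Qed.

Lemma mul_tpow_ti a : tp a * ti = tp (a - 1).
Proof.
rewrite -mul_ti_tpow; apply: commr_sym; apply: commr_tpow.
by rewrite /GRing.comm t_ti ti_t.
Qed.

Definition powers_lt (r : nat) (b : S) := exists2 i, (i < r)%N & b = t ^+ i.

Section FiniteOrder.
Variables (G : S -> Prop) (mm : nat) (v vi : nat -> S).
Hypothesis G_central : forall y, G y -> forall x, GRing.comm y x.
Hypothesis root_gen :
  forall k, (1 <= k <= mm)%N -> [/\ G (v k), G (vi k) & vi k * v k = 1].
Hypothesis t_root : \prod_(1 <= k < mm.+1) (t - v k) = 0.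
Local Notation A := (gen_alg G).
Local Notation span_lt r := (lin_comb A (powers_lt r)).

Let A_comm c : A c -> forall x, GRing.comm c x.
Proof. by move=> Ac x; apply: gen_alg_comm Ac => y /G_central. Qed.

Lemma span_lt_mono r r' x : (r <= r')%N -> span_lt r x -> span_lt r' x.
Proof.
by move=> le_rr'; apply: (lin_comb_mono G_central) => _ [i lt_ir ->]; exists i => //; lia.
Qed.

Lemma span_lt_mulr_root r k x :
  (1 <= k <= mm)%N -> span_lt r x -> span_lt r.+1 (x * (t - v k)).
Proof.
move=> /root_gen[Gv _ _] rx; rewrite mulrBr; apply: lin_combB.
  apply: (lin_comb_mulr G_central _ rx) => _ [i lt_ir ->].
  by rewrite -exprSr; apply: lin_comb_mem; exists i.+1.
apply: span_lt_mono (leqnSn r) _; apply: (lin_comb_mulr G_central _ rx) => _ [i lt_ir ->].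
rewrite -(A_comm (ga_gen Gv)); apply: lin_combMl (ga_gen Gv) _.
by apply: lin_comb_mem; exists i.
Qed.

Lemma root_prod_lead r : (r <= mm)%N ->
  span_lt r (\prod_(1 <= k < r.+1) (t - v k) - t ^+ r).
Proof.
elim: r => [|r IHr] le_r_mm.
  by rewrite big_geq // subrr; apply: lin_comb0.
have [Gv _ _] := root_gen (k := r.+1) ltac:(lia).
rewrite big_nat_recr //=; set z := \prod_(1 <= k < r.+1) _.
have -> : z * (t - v r.+1) - t ^+ r.+1 = (z - t ^+ r) * (t - v r.+1) - t ^+ r * v r.+1.
  by rewrite mulrBl [t ^+ r * (t - _)]mulrBr -exprSr opprB addrA addrAC addrK.
apply: lin_combB; first by apply: span_lt_mulr_root; [lia | apply: IHr; lia].
rewrite -(A_comm (ga_gen Gv)); apply: lin_combMl (ga_gen Gv) _.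
by apply: lin_comb_mem; exists r.
Qed.

Lemma root_prod_inv r : (r <= mm)%N ->
  exists d, [/\ A d, exists2 e, A e & e * d = 1 &
    span_lt r (ti * \prod_(1 <= k < r.+1) (t - v k) - d * ti)].
Proof.
elim: r => [|r IHr] le_r_mm.
  exists 1; split; [exact: gen_alg1 | by exists 1; [exact: gen_alg1 | rewrite mulr1] |].
  by rewrite big_geq // mulr1 mul1r subrr; apply: lin_comb0.
have [Gv Gvi vi_v] := root_gen (k := r.+1) ltac:(lia).
have [d [Ad [e Ae ed] IHd]] := IHr ltac:(lia).
exists (- (d * v r.+1)); split.
- by apply: gen_algN; apply: ga_mul Ad (ga_gen Gv).
- exists (- (e * vi r.+1)); first by apply: gen_algN; apply: ga_mul Ae (ga_gen Gvi).
  by rewrite mulrNN -mulrA (mulrA (vi _)) (A_comm (ga_gen Gvi)) -mulrA vi_v mulr1 ed.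
rewrite big_nat_recr //= mulrA; set y := ti * _ in IHd *.
have -> : y * (t - v r.+1) - - (d * v r.+1) * ti = (y - d * ti) * (t - v r.+1) + d * t ^+ 0.
  rewrite expr0 mulr1 mulNr opprK mulrBl [d * ti * _]mulrBr -(mulrA d ti t) ti_t mulr1.
  by rewrite -(mulrA d ti) -(A_comm (ga_gen Gv) ti) mulrA opprB addrA subrK.
apply: lin_combD; first by apply: span_lt_mulr_root IHd; lia.
by apply: lin_combMl Ad _; apply: lin_comb_mem; exists 0%N.
Qed.

Lemma tpow_span_lt a : span_lt mm (tp a).
Proof.
have top : span_lt mm (t ^+ mm).
  by have := root_prod_lead (leqnn mm); rewrite t_root sub0r => /lin_combN; rewrite opprK.
have ti_span : span_lt mm ti.
  have [d [_ [e Ae ed] ]] := root_prod_inv (leqnn mm).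
  rewrite t_root mulr0 sub0r => dti.
  rewrite -[ti]mul1r -ed -mulrA; apply: lin_combMl Ae _.
  by rewrite -[d * ti]opprK; apply: lin_combN.
have one : span_lt mm 1.
  have [mm0 | mm_gt0] := posnP mm; first by move: top; rewrite mm0 expr0.
  by apply: lin_comb_mem; exists 0%N; rewrite ?expr0.
have mul_t x : span_lt mm x -> span_lt mm (t * x).
  apply: (lin_comb_mull G_central) => _ [i lt_i_mm ->]; rewrite -exprS.
  have [-> // | ne_Si_mm] := eqVneq i.+1 mm.
  by apply: lin_comb_mem; exists i.+1 => //; lia.
have mul_ti x : span_lt mm x -> span_lt mm (ti * x).
  apply: (lin_comb_mull G_central) => _ [[|i] lt_i_mm ->]; first by rewrite expr0 mulr1.
  by rewrite exprS mulrA ti_t mul1r; apply: lin_comb_mem; exists i => //; lia.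
case: a => k /=.
  by elim: k => [|k IHk]; rewrite ?expr0 // exprS; apply: mul_t.
by elim: k => [|k IHk]; rewrite ?expr1 // exprS; apply: mul_ti.
Qed.

End FiniteOrder.
End IntegerPowers.

Lemma commr_prod_nat (R : pzSemiRingType) (x : R) a b (F : nat -> R) :
  (forall i, (a <= i < b)%N -> GRing.comm x (F i)) ->
  GRing.comm x (\prod_(a <= i < b) F i).
Proof. by move=> xF; rewrite big_nat_cond; apply: commr_prod => i /andP[/xF]. Qed.

Section HeckeSpanning.
Variables (m : mval) (n : nat) (S : algType Cx)
  (q qi : S) (v vi : nat -> S) (t ti : S) (s si : nat -> S).
Hypothesis n_gt0 : (1 <= n)%N.
Hypothesis rel : hecke_rel m n q qi v vi t ti s.
Hypothesis s_si : forall i, (1 <= i <= n - 1)%N -> s i * si i = 1 /\ si i * s i = 1.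

Let q_qi : q * qi = 1. Proof. by case: rel => [[[qqi _] _ _ _] _ _]. Qed.
Let qi_q : qi * q = 1. Proof. by case: rel => [[[_ qiq] _ _ _] _ _]. Qed.
Let v_inv k : vidx m k -> v k * vi k = 1 /\ vi k * v k = 1.
Proof. by case: rel => [[_ vV _ _] _ _]; apply: vV. Qed.
Let q_central x : GRing.comm q x.
Proof. by case: rel => [[_ _ [qC _] _] _ _]; apply: qC. Qed.
Let v_central k : vidx m k -> forall x, GRing.comm (v k) x.
Proof. by case: rel => [[_ _ [_ vC] _] _ _]; apply: vC. Qed.
Let t_ti : t * ti = 1. Proof. by case: rel => [[_ _ _ [tti _]] _ _]. Qed.
Let ti_t : ti * t = 1. Proof. by case: rel => [[_ _ _ [_ tit]] _ _]. Qed.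
Let braid i : (1 <= i)%N -> (i <= n - 2)%N ->
  s i * s i.+1 * s i = s i.+1 * s i * s i.+1.
Proof. by case: rel => _ [h _ _ _ _] _; apply: h. Qed.
Let s_far i j : (1 <= i <= n - 1)%N -> (1 <= j <= n - 1)%N ->
  ((i.+1 < j) || (j.+1 < i))%N -> GRing.comm (s i) (s j).
Proof. by case: rel => _ [_ h _ _ _] _; apply: h. Qed.
Let t_s1 : (2 <= n)%N -> t * s 1 * t * s 1 = s 1 * t * s 1 * t.
Proof. by case: rel => _ [_ _ h _ _] _; apply: h. Qed.
Let t_s i : (1 < i <= n - 1)%N -> GRing.comm t (s i).
Proof. by case: rel => _ [_ _ _ h _] _; apply: h. Qed.
Let s_quad i : (1 <= i <= n - 1)%N -> s i ^+ 2 = (q - qi) * s i + 1.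
Proof. by case: rel => _ [_ _ _ _ h] _; apply: h. Qed.
Let t_root : if m is Some mm then \prod_(1 <= k < mm.+1) (t - v k) = 0 else True.
Proof. by case: rel => _ _ root. Qed.

Definition coef_gen (y : S) :=
  y = q \/ y = qi \/ exists k, vidx m k /\ (y = v k \/ y = vi k).
Definition Wt_gen (y : S) :=
  y = q \/ y = qi \/ (exists k, vidx m k /\ (y = v k \/ y = vi k)) \/
  y = t \/ y = ti \/ (exists i, (1 <= i <= n - 2)%N /\ y = s i).
Definition hecke_gen (y : S) :=
  y = q \/ y = qi \/ (exists k, vidx m k /\ (y = v k \/ y = vi k)) \/
  y = t \/ y = ti \/ (exists i, (1 <= i <= n - 1)%N /\ y = s i).

Local Notation coef := (gen_alg coef_gen).
Local Notation Wt := (gen_alg Wt_gen).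
Local Notation tp := (tpow t ti).

(* Locked, so that rewriting with [mulrBl] and friends does not see through it. *)
Definition qd := locked (q - qi).
Definition sigma_up := \prod_(1 <= i < n) s i.
Definition sigma_down j := \prod_(0 <= k < j) si (j - k)%N.
Definition sigma_down_shift j := \prod_(0 <= k < j) si (j.+1 - k)%N.

Definition spanning (b : S) := exists j a w,
  (j <= n - 1)%N /\ Eset m a /\ Wt w /\ b = sigma_down j * tp a * sigma_up * w.
Local Notation span := (lin_comb coef spanning).

Lemma coef_gen_central y : coef_gen y -> forall x, GRing.comm y x.
Proof.
move=> [-> | [-> | [k [mk [-> | ->]]]]] x.
- exact: q_central.
- exact: commr_sym (commr_inverse (commr_sym (q_central x)) q_qi qi_q).
- exact: v_central.
- have [vV Vv] := v_inv mk.
  exact: commr_sym (commr_inverse (commr_sym (v_central mk x)) vV Vv).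
Qed.

Lemma coef_comm c x : coef c -> GRing.comm c x.
Proof. by move=> Cc; apply: gen_alg_comm Cc => y /coef_gen_central. Qed.

Lemma coef_qd : coef qd.
Proof. by rewrite /qd -lock; apply: gen_algB; apply: ga_gen; rewrite /coef_gen; tauto. Qed.

Lemma qd_comm x : GRing.comm qd x.
Proof. exact: coef_comm coef_qd. Qed.

Lemma coef_Wt c : coef c -> Wt c.
Proof. by apply: gen_alg_mono => y; rewrite /coef_gen /Wt_gen; tauto. Qed.

Lemma si_eq i : (1 <= i <= n - 1)%N -> si i = s i - qd.
Proof.
move=> hi; have [s_si_i si_s_i] := s_si hi.
have sK : s i * (s i - qd) = 1.
  by rewrite mulrBr -expr2 s_quad // -qd_comm /qd -lock addrC addKr.
by rewrite -[si i]mulr1 -sK mulrA si_s_i mul1r.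
Qed.

Lemma s_eq i : (1 <= i <= n - 1)%N -> s i = si i + qd.
Proof. by move=> hi; rewrite si_eq // subrK. Qed.

Lemma s_conj_si i x : (1 <= i <= n - 1)%N ->
  s i * x * si i = si i * x * s i + qd * (x * s i) - qd * (s i * x).
Proof.
move=> hi; rewrite !si_eq // mulrBr !mulrBl [qd * (x * _)]mulrA subrK.
by rewrite -qd_comm -!mulrA.
Qed.

Lemma s_si_far i k : (1 <= i <= n - 1)%N -> (1 <= k <= n - 1)%N ->
  ((i.+1 < k) || (k.+1 < i))%N -> GRing.comm (s i) (si k).
Proof. by move=> hi hk far; have [] := s_si hk; apply: commr_inverse (s_far hi hk far). Qed.

Lemma t_si k : (1 < k <= n - 1)%N -> GRing.comm t (si k).
Proof. by move=> hk; have [] := s_si (i := k) ltac:(lia); apply: commr_inverse (t_s hk). Qed.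

Lemma braid_si j : (1 <= j)%N -> (j <= n - 2)%N ->
  s j * si j.+1 * si j = si j.+1 * si j * s j.+1.
Proof.
move=> j_ge1 le_j_n.
have [sj_sij sij_sj] := s_si (i := j) ltac:(lia).
have [sSj_siSj siSj_sSj] := s_si (i := j.+1) ltac:(lia).
have e1 : si j.+1 * si j * (s j * s j.+1 * s j) * si j.+1 * si j = s j * si j.+1 * si j.
  by rewrite !mulrA -(mulrA (si j.+1) (si j) (s j)) sij_sj mulr1 siSj_sSj mul1r.
have e2 : si j.+1 * si j * (s j.+1 * s j * s j.+1) * si j.+1 * si j
        = si j.+1 * si j * s j.+1.
  rewrite !mulrA -(mulrA _ (s j.+1) (si j.+1)) sSj_siSj mulr1.
  by rewrite -(mulrA _ (s j) (si j)) sj_sij mulr1.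
by rewrite -e1 braid // e2.
Qed.

Lemma s_sigma_up k : (1 <= k)%N -> (k <= n - 2)%N -> s k.+1 * sigma_up = sigma_up * s k.
Proof.
move=> k_ge1 le_k_n.
rewrite /sigma_up (big_cat_nat (n := k)) //=; last by lia.
rewrite (big_ltn (m := k)) //; last by lia.
rewrite (big_ltn (m := k.+1)) //; last by lia.
set L := \prod_(1 <= i < k) s i; set R := \prod_(k.+2 <= i < n) s i.
have sSk_L : GRing.comm (s k.+1) L by apply: commr_prod_nat => i ?; apply: s_far; lia.
have sk_R : GRing.comm (s k) R by apply: commr_prod_nat => i ?; apply: s_far; lia.
rewrite mulrA sSk_L -!mulrA -sk_R !mulrA; congr (_ * _); rewrite -!mulrA.
by congr (_ * _); rewrite !mulrA braid.
Qed.

Lemma si_sigma_up k : (1 <= k)%N -> (k <= n - 2)%N -> si k.+1 * sigma_up = sigma_up * si k.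
Proof.
move=> k_ge1 le_k_n.
have [sk_sik _] := s_si (i := k) ltac:(lia).
have [_ siSk_sSk] := s_si (i := k.+1) ltac:(lia).
rewrite -[si k.+1 * _]mulr1 -sk_sik mulrA -(mulrA _ sigma_up) -s_sigma_up //.
by rewrite mulrA siSk_sSk mul1r.
Qed.

Lemma sigma_up_s1 : (2 <= n)%N -> sigma_up = s 1 * \prod_(2 <= i < n) s i.
Proof. by move=> n_ge2; rewrite /sigma_up big_ltn. Qed.

Lemma sigma_down0 : sigma_down 0 = 1.
Proof. by rewrite /sigma_down big_geq. Qed.

Lemma sigma_downS j : sigma_down j.+1 = si j.+1 * sigma_down j.
Proof. by rewrite /sigma_down big_nat_recl // subn0. Qed.

Lemma sigma_down_shift0 : sigma_down_shift 0 = 1.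
Proof. by rewrite /sigma_down_shift big_geq. Qed.

Lemma sigma_down_shiftS j : sigma_down_shift j.+1 = si j.+2 * sigma_down_shift j.
Proof. by rewrite /sigma_down_shift big_nat_recl // subn0. Qed.

Lemma sigma_downSr j : sigma_down j.+1 = sigma_down_shift j * si 1.
Proof.
elim: j => [|j IHj]; first by rewrite sigma_downS sigma_down0 sigma_down_shift0 mulr1 mul1r.
by rewrite sigma_downS IHj sigma_down_shiftS mulrA.
Qed.

Lemma commr_sigma_down x j :
  (forall k, (1 <= k <= j)%N -> GRing.comm x (si k)) -> GRing.comm x (sigma_down j).
Proof. by move=> x_si; apply: commr_prod_nat => k ?; apply: x_si; lia. Qed.

Lemma commr_sigma_down_shift x j :
  (forall k, (2 <= k <= j.+1)%N -> GRing.comm x (si k)) ->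
  GRing.comm x (sigma_down_shift j).
Proof. by move=> x_si; apply: commr_prod_nat => k ?; apply: x_si; lia. Qed.

Lemma sigma_down_shift_up j :
  (j.+1 <= n - 1)%N -> sigma_down_shift j * sigma_up = sigma_up * sigma_down j.
Proof.
elim: j => [|j IHj] le_j_n; first by rewrite sigma_down0 sigma_down_shift0 mulr1 mul1r.
rewrite sigma_down_shiftS -mulrA IHj; last by lia.
by rewrite mulrA si_sigma_up; try lia; rewrite -mulrA -sigma_downS.
Qed.

Lemma sigma_down_prod_s j :
  (j <= n - 1)%N -> sigma_down j * \prod_(1 <= i < j.+1) s i = 1.
Proof.
elim: j => [|j IHj] le_j_n; first by rewrite sigma_down0 big_geq // mul1r.
rewrite sigma_downS big_nat_recr // mulrA -(mulrA (si _)) IHj; last lia.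
by rewrite mulr1; have [_ ->] := s_si (i := j.+1) ltac:(lia).
Qed.

Lemma s_sigma_down j i : (j <= n - 1)%N -> (1 <= i < j)%N ->
  s i * sigma_down j = sigma_down j * s i.+1.
Proof.
elim: j i => [|j IHj] i le_j_n hi; first by lia.
rewrite sigma_downS.
have [lt_ij | le_ji] := ltnP i j.
  by rewrite mulrA s_si_far; try lia; rewrite -mulrA IHj; try lia; rewrite mulrA.
have -> : i = j by lia.
case: j IHj le_j_n hi le_ji => [|j] IHj le_j_n hi le_ji; first by lia.
rewrite sigma_downS !mulrA braid_si; try lia.
rewrite -!mulrA; congr (_ * (_ * _)).
by apply: commr_sigma_down => k ?; apply: s_si_far; lia.
Qed.

Lemma Wt_t : Wt t. Proof. by apply: ga_gen; rewrite /Wt_gen; tauto. Qed.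
Lemma Wt_ti : Wt ti. Proof. by apply: ga_gen; rewrite /Wt_gen; tauto. Qed.

Lemma Wt_s i : (1 <= i <= n - 2)%N -> Wt (s i).
Proof. by move=> hi; apply: ga_gen; do 5 right; exists i. Qed.

Lemma Wt_si i : (1 <= i <= n - 2)%N -> Wt (si i).
Proof. by move=> hi; rewrite si_eq; [apply: gen_algB (Wt_s hi) (coef_Wt coef_qd) | lia]. Qed.

Lemma Wt_tpow a : Wt (tp a).
Proof. by case: a => k; apply: gen_algX; [exact: Wt_t | exact: Wt_ti]. Qed.

Lemma Wt_sigma_down j : (j <= n - 2)%N -> Wt (sigma_down j).
Proof.
elim: j => [|j IHj] le_j_n; first by rewrite sigma_down0; apply: gen_alg1.
by rewrite sigma_downS; apply: ga_mul; [apply: Wt_si | apply: IHj]; lia.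
Qed.

Lemma tpow_span_Eset a : lin_comb coef (fun b => exists2 a', Eset m a' & b = tp a') (tp a).
Proof.
case Em: m t_root => [mm|] root; last by apply: lin_comb_mem; exists a; rewrite ?Em.
have root_gen k : (1 <= k <= mm)%N -> [/\ coef_gen (v k), coef_gen (vi k) & vi k * v k = 1].
  move=> hk; have mk : vidx m k by rewrite Em.
  rewrite /coef_gen; split; last by case: (v_inv mk).
    by do 2 right; exists k; split => //; left.
  by do 2 right; exists k; split => //; right.
apply: (lin_comb_mono coef_gen_central _ (tpow_span_lt ti_t coef_gen_central root_gen root a)).
by move=> _ [i lt_i_mm ->]; exists (Posz i); rewrite ?Em //= ltz_nat.
Qed.

Lemma span_basic j a w : (j <= n - 1)%N -> Wt w -> span (sigma_down j * tp a * sigma_up * w).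
Proof.
move=> le_j_n Ww; rewrite -mulrA; apply: (lin_comb_sandwich coef_gen_central _ (tpow_span_Eset a)).
by move=> _ [a' Ea' ->]; rewrite mulrA; apply: lin_comb_mem; exists j, a', w.
Qed.

Lemma span_one : span 1.
Proof.
have := span_basic 0 (leqnn (n - 1)) (gen_alg1 Wt_gen); rewrite tpow0 !mulr1.
by have := sigma_down_prod_s (leqnn (n - 1)); rewrite subn1 prednK // => ->.
Qed.

Lemma mulr_sandwich_qd l x y z r :
  l * (x + qd * y - qd * z) * r = l * x * r + qd * (l * y * r) - qd * (l * z * r).
Proof. by rewrite mulrBr mulrDr !mulrBl !mulrDl !mulrA -(qd_comm l). Qed.

Section RankTwo.
Hypothesis n_ge2 : (2 <= n)%N.

Let s1_si1 : s 1 * si 1 = 1. Proof. by have [] := s_si (i := 1) ltac:(lia). Qed.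
Let si1_s1 : si 1 * s 1 = 1. Proof. by have [] := s_si (i := 1) ltac:(lia). Qed.
Let si1E : si 1 = s 1 - qd. Proof. by apply: si_eq; lia. Qed.
Let s1_sq : s 1 * s 1 = qd * s 1 + 1.
Proof. by rewrite -expr2 s_quad; [rewrite /qd -lock | lia]. Qed.

Lemma t_comm_s1ts1 : GRing.comm t (s 1 * t * s 1).
Proof. by rewrite /GRing.comm !mulrA t_s1. Qed.

Lemma t_comm_si1tisi1 : GRing.comm t (si 1 * ti * si 1).
Proof.
apply: commr_inverse t_comm_s1ts1 _ _.
  by rewrite !mulrA -(mulrA _ (s 1)) s1_si1 mulr1 -(mulrA _ t) t_ti mulr1.
by rewrite !mulrA -(mulrA _ (si 1)) si1_s1 mulr1 -(mulrA _ ti) ti_t mulr1.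
Qed.

Lemma mul_t_si1_tpow_s1 a : t * si 1 * tp a * s 1 =
  si 1 * tp a * s 1 * t + qd * (t * s 1 * tp a) - qd * (tp (a + 1) * s 1).
Proof.
set J := s 1 * t * s 1.
have JT : GRing.comm J (tp a) := commr_tpow t_ti ti_t (commr_sym t_comm_s1ts1) a.
have si1J : si 1 * J = t * s 1 by rewrite /J !mulrA si1_s1 mul1r.
have tsi1 : t * si 1 = si 1 * J - qd * t by rewrite si1J si1E mulrBr qd_comm.
have Js1 : J * s 1 = qd * J + s 1 * t.
  by rewrite /J -!mulrA s1_sq mulrDr mulr1 mulrDr !mulrA -(qd_comm (s 1 * t)) !mulrA.
have -> : t * si 1 * tp a * s 1 = si 1 * tp a * (J * s 1) - qd * (t * tp a * s 1).
  by rewrite tsi1 !mulrBl -(mulrA (si 1) J) JT !mulrA.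
rewrite Js1 mulrDr -(mul_t_tpow t_ti).
have -> : si 1 * tp a * (qd * J) = qd * (t * s 1 * tp a).
  rewrite !mulrA -(qd_comm (si 1 * tp a)) -!mulrA (mulrA (s 1) t (s 1)) -JT.
  by rewrite (mulrA (si 1)) si1J -!mulrA.
by rewrite (addrC (qd * _)) !mulrA.
Qed.

Lemma mul_ti_si1_tpow_s1 a : ti * si 1 * tp a * s 1 =
  si 1 * tp a * s 1 * ti + qd * (tp a * s 1 * ti) - qd * (s 1 * tp (a - 1)).
Proof.
set J := si 1 * ti * si 1.
have JT : GRing.comm J (tp a) := commr_tpow t_ti ti_t (commr_sym t_comm_si1tisi1) a.
have tisi1 : ti * si 1 = s 1 * J by rewrite /J !mulrA s1_si1 mul1r.
have -> : ti * si 1 * tp a * s 1 = s 1 * tp a * si 1 * ti.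
  by rewrite tisi1 -(mulrA (s 1)) JT /J !mulrA -(mulrA _ (si 1) (s 1)) si1_s1 mulr1.
rewrite s_conj_si; last by lia.
by rewrite mulrBl mulrDl -(mul_tpow_ti t_ti ti_t) -!mulrA.
Qed.

End RankTwo.

Lemma span_mul_s i j a w : (1 <= i <= n - 1)%N -> (j <= n - 1)%N -> Wt w ->
  span (s i * (sigma_down j * tp a * sigma_up * w)).
Proof.
move=> hi le_j_n Ww.
have sT k (hk : (1 < k <= n - 1)%N) := commr_tpow t_ti ti_t (commr_sym (t_s hk)) a.
have [lt_ij | lt_ji | <-] := ltngtP i j.
- rewrite !mulrA s_sigma_down //; last by lia.
  rewrite -(mulrA (sigma_down j)) sT; last by lia.
  rewrite mulrA -(mulrA _ (s i.+1)) s_sigma_up; try lia.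
  by rewrite mulrA -mulrA; apply: span_basic => //; apply: ga_mul Ww; apply: Wt_s; lia.
- have [lt_Sj_i | le_i_Sj] := ltnP j.+1 i.
    have sD : GRing.comm (s i) (sigma_down j).
      by apply: commr_sigma_down => k ?; apply: s_si_far; lia.
    have sP : s i * sigma_up = sigma_up * s i.-1.
      have iE : i = i.-1.+1 by lia.
      by rewrite {1}iE s_sigma_up //; lia.
    rewrite !mulrA sD -(mulrA (sigma_down j)) sT; last by lia.
    rewrite mulrA -(mulrA _ (s i)) sP.
    by rewrite mulrA -mulrA; apply: span_basic => //; apply: ga_mul Ww; apply: Wt_s; lia.
  have -> : i = j.+1 by lia.
  rewrite (s_eq (i := j.+1)); last by lia.
  rewrite mulrDl; apply: lin_combD.
    by rewrite !mulrA -sigma_downS; apply: span_basic => //; lia.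
  by apply: lin_combMl coef_qd _; apply: span_basic => //; lia.
- case: i hi le_j_n => [|i] hi le_i_n; first by lia.
  have [s_si_i _] := s_si hi.
  by rewrite sigma_downS !mulrA s_si_i mul1r; apply: span_basic => //; lia.
Qed.

Lemma span_mul_t j a w : (j <= n - 1)%N -> Wt w ->
  span (t * (sigma_down j * tp a * sigma_up * w)).
Proof.
move=> le_j_n Ww; case: j le_j_n => [|j] le_j_n.
  rewrite sigma_down0 !mul1r !mulrA (mul_t_tpow t_ti) -(mul1r (tp _)) -sigma_down0.
  exact: span_basic.
have n_ge2 : (2 <= n)%N by lia.
set D := sigma_down_shift j; set P' := \prod_(2 <= i < n) s i.
have tD : GRing.comm t D by apply: commr_sigma_down_shift => k ?; apply: t_si; lia.
have tP' : GRing.comm t P' by apply: commr_prod_nat => i ?; apply: t_s; lia.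
have DT := commr_tpow t_ti ti_t (commr_sym tD).
have P'T := commr_tpow t_ti ti_t (commr_sym tP').
have DP : D * sigma_up = sigma_up * sigma_down j by apply: sigma_down_shift_up; lia.
have -> : t * (sigma_down j.+1 * tp a * sigma_up * w) = D * (t * si 1 * tp a * s 1) * (P' * w).
  by rewrite sigma_downSr sigma_up_s1 // !mulrA tD.
rewrite mul_t_si1_tpow_s1 // mulr_sandwich_qd; apply: lin_combB; first apply: lin_combD.
- have -> : D * (si 1 * tp a * s 1 * t) * (P' * w) = sigma_down j.+1 * tp a * sigma_up * (t * w).
    by rewrite sigma_downSr sigma_up_s1 // -!mulrA (mulrA t P') tP' -mulrA.
  by apply: span_basic => //; apply: ga_mul Wt_t Ww.
- apply: lin_combMl coef_qd _.
  have -> : D * (t * s 1 * tp a) * (P' * w) =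
      sigma_down 0 * tp 1 * sigma_up * (sigma_down j * tp a * w).
    rewrite sigma_down0 mul1r tpow1 !mulrA -(mulrA t sigma_up) -DP sigma_up_s1 // -!mulrA.
    by rewrite (mulrA (tp a) P') -P'T -(mulrA P') (mulrA D t) -tD -!mulrA.
  apply: span_basic => //; apply: ga_mul Ww.
  by apply: ga_mul (Wt_tpow a); apply: Wt_sigma_down; lia.
- apply: lin_combMl coef_qd _.
  have -> : D * (tp (a + 1) * s 1) * (P' * w) =
      sigma_down 0 * tp (a + 1) * sigma_up * (sigma_down j * w).
    rewrite sigma_down0 mul1r !mulrA -(mulrA _ sigma_up) -DP sigma_up_s1 // -!mulrA.
    by rewrite (mulrA D) DT -!mulrA.
  by apply: span_basic => //; apply: ga_mul Ww; apply: Wt_sigma_down; lia.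
Qed.

Lemma span_mul_ti j a w : (j <= n - 1)%N -> Wt w ->
  span (ti * (sigma_down j * tp a * sigma_up * w)).
Proof.
move=> le_j_n Ww; case: j le_j_n => [|j] le_j_n.
  rewrite sigma_down0 !mul1r !mulrA (mul_ti_tpow ti_t) -(mul1r (tp _)) -sigma_down0.
  exact: span_basic.
have n_ge2 : (2 <= n)%N by lia.
set D := sigma_down_shift j; set P' := \prod_(2 <= i < n) s i.
have tD : GRing.comm t D by apply: commr_sigma_down_shift => k ?; apply: t_si; lia.
have tP' : GRing.comm t P' by apply: commr_prod_nat => i ?; apply: t_s; lia.
have tiD : GRing.comm ti D := commr_sym (commr_inverse (commr_sym tD) t_ti ti_t).
have tiP' : GRing.comm ti P' := commr_sym (commr_inverse (commr_sym tP') t_ti ti_t).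
have DT := commr_tpow t_ti ti_t (commr_sym tD).
have P'T := commr_tpow t_ti ti_t (commr_sym tP').
have DP : D * sigma_up = sigma_up * sigma_down j by apply: sigma_down_shift_up; lia.
have -> : ti * (sigma_down j.+1 * tp a * sigma_up * w) = D * (ti * si 1 * tp a * s 1) * (P' * w).
  by rewrite sigma_downSr sigma_up_s1 // !mulrA tiD.
rewrite mul_ti_si1_tpow_s1 // mulr_sandwich_qd; apply: lin_combB; first apply: lin_combD.
- have -> : D * (si 1 * tp a * s 1 * ti) * (P' * w) = sigma_down j.+1 * tp a * sigma_up * (ti * w).
    by rewrite sigma_downSr sigma_up_s1 // -!mulrA (mulrA ti P') tiP' -mulrA.
  by apply: span_basic => //; apply: ga_mul Wt_ti Ww.
- apply: lin_combMl coef_qd _.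
  have -> : D * (tp a * s 1 * ti) * (P' * w) =
      sigma_down 0 * tp a * sigma_up * (sigma_down j * ti * w).
    rewrite sigma_down0 mul1r !mulrA -(mulrA _ sigma_up) -DP sigma_up_s1 // -!mulrA.
    by rewrite (mulrA ti P') tiP' -(mulrA P') (mulrA D (tp a)) DT -!mulrA.
  apply: span_basic => //; apply: ga_mul Ww.
  by apply: ga_mul Wt_ti; apply: Wt_sigma_down; lia.
- apply: lin_combMl coef_qd _.
  have -> : D * (s 1 * tp (a - 1)) * (P' * w) =
      sigma_down 0 * tp 0 * sigma_up * (sigma_down j * tp (a - 1) * w).
    rewrite sigma_down0 tpow0 !mul1r !mulrA -DP sigma_up_s1 // -!mulrA.
    by rewrite (mulrA (tp _) P') -P'T -!mulrA.
  apply: span_basic => //; apply: ga_mul Ww.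
  by apply: ga_mul (Wt_tpow _); apply: Wt_sigma_down; lia.
Qed.

Lemma span_mul_gen y b : hecke_gen y -> spanning b -> span (y * b).
Proof.
move=> gy [j [a [w [le_j_n [Ea [Ww ->]]]]]].
have coef_case : coef_gen y -> span (y * (sigma_down j * tp a * sigma_up * w)).
  by move=> Cy; apply: lin_combMl (ga_gen Cy) _; apply: lin_comb_mem; exists j, a, w.
case: gy => [Ey | [Ey | [Vy | [Ey | [Ey | [i [hi Ey]]]]]]]; try subst y.
- by apply: coef_case; left.
- by apply: coef_case; right; left.
- by apply: coef_case; right; right.
- exact: span_mul_t.
- exact: span_mul_ti.
- exact: span_mul_s.
Qed.

Lemma span_mull y x : gen_alg hecke_gen y -> span x -> span (y * x).
Proof.
move=> Hy; elim: Hy x => [c | g /span_mul_gen gP | y1 y2 _ IH1 _ IH2 | y1 y2 _ IH1 _ IH2] x Sx.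
- exact: lin_combMl (ga_scal _ c) Sx.
- by apply: (lin_comb_mull coef_gen_central _ Sx) => b /gP.
- by rewrite mulrDl; apply: lin_combD; [apply: IH1 | apply: IH2].
- by rewrite -mulrA; apply: IH1; apply: IH2.
Qed.

Lemma hecke_in_span x : gen_alg hecke_gen x -> span x.
Proof. by move=> Hx; rewrite -[x]mulr1; apply: span_mull Hx span_one. Qed.

End HeckeSpanning.

Theorem mainTheorem2 (m : mval) (n : nat) (S : algType Cx)
  (q qi : S) (v vi : nat -> S) (t ti : S) (s si : nat -> S) :
  mval_ok m -> (1 <= n)%N ->
  hecke_rel m n q qi v vi t ti s ->
  (* si i is the inverse of sigma_i *)
  (forall i, (1 <= i <= n - 1)%N -> s i * si i = 1 /\ si i * s i = 1) ->
  let coef := gen_alg (fun y => y = q \/ y = qi \/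
                 exists k, vidx m k /\ (y = v k \/ y = vi k)) in
  let Wt := gen_alg (fun y => y = q \/ y = qi \/
                 (exists k, vidx m k /\ (y = v k \/ y = vi k)) \/
                 y = t \/ y = ti \/
                 (exists i, (1 <= i <= n - 2)%N /\ y = s i)) in
  let H := gen_alg (fun y => y = q \/ y = qi \/
                 (exists k, vidx m k /\ (y = v k \/ y = vi k)) \/
                 y = t \/ y = ti \/
                 (exists i, (1 <= i <= n - 1)%N /\ y = s i)) in
  forall x, H x ->
  lin_comb coef
    (fun b => exists (j : nat) (a : int) (w : S),
       (j <= n - 1)%N /\ Eset m a /\ Wt w /\
       b = (\prod_(0 <= k < j) si (j - k)%N) * tpow t ti a *
           (\prod_(1 <= i < n) s i) * w)
    x.
Proof.
by move=> _ n_gt0 rel s_si coef Wt H x; apply: hecke_in_span.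
Qed.
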